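(* Fix integers $m\ge 1$ and $\theta\in(0,1]$, and let $f$ be a homogeneous voting rule. Suppose there is a neighborhood $U$ of the expected normalized profile $\hat P$ (in the space of normalized continuous profiles on candidates $\{1,\dots,m\}$, with the topology of weight vectors in $\mathbb R^{m!}$) such that $f$ is not CM in any continuous profile of $U$. Then $\lim_{n\to\infty}\rho(f,m,n,\theta)=0$.
   Context: A ranking over a finite candidate set is a strict total order on it. A discrete profile $P$ consists of a finite nonempty candidate set, a finite nonempty voter set of size $n$, and a ranking $P_v$ for each voter $v$; $w(p,P)$ is the number of voters with ranking $p$, $w(P)=n$. A continuous profile consists of a candidate set, a total weight $w(P)>0$ and weights $w(p,P)\ge0$ for each ranking $p$ summing to $w(P)$. The normalized profile $\bar P$ has weights $w(p,P)/w(P)$. Profiles on a fixed candidate set are identified with their weight vectors in $\mathbb R^{m!}$. A voting rule maps every profile (discrete or continuous) to one of its candidates; it is homogeneous if $f(P)=f(\bar P)$ always. CM (discrete): $f$ is CM in discrete $P$ if there is a discrete $Q$ with the same candidates and voters, $f(Q)\ne f(P)$, and every voter $v$ with $Q_v\ne P_v$ prefers $f(Q)$ to $f(P)$ according to $P_v$. CM (continuous): $f$ is CM in continuous $P$ if there is a continuous $Q$ with the same candidates and total weight, $f(Q)\ne f(P)$, and every ranking $p$ with $w(p,Q)<w(p,P)$ prefers $f(Q)$ to $f(P)$. Perturbed Culture with parameters $m,n\ge1$ and $\theta\in(0,1]$: a random discrete profile with candidates $\{1,\dots,m\}$ and voters $\{1,\dots,n\}$, where each voter independently has ranking $1\succ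 2\succ\cdots\succ m$ with probability $\theta$ and a uniformly random ranking with probability $1-\theta$. The expected normalized profile $\hat P$ is the continuous profile of total weight $1$ in which $1\succ\cdots\succ m$ has weight $\theta+\frac{1-\theta}{m!}$ and every other ranking has weight $\frac{1-\theta}{m!}$. The CM rate $\rho(f,m,n,\theta)$ is the probability that $f$ is CM in a profile drawn from this model. *)

From HB Require Import structures.
From mathcomp Require Import all_boot all_order all_algebra all_fingroup.
From mathcomp Require Import all_classical all_reals all_analysis.
Set Implicit Arguments. Unset Strict Implicit. Unset Printing Implicit Defensive.
Import Order.TTheory GRing.Theory Num.Theory.
Local Open Scope ring_scope.

(* Candidates are 'I_m = {0,...,m-1} (candidate i stands for i+1).
   A ranking is a permutation p of 'I_m, read as: p a = position of
   candidate a (position 0 = top).  The ranking 1 > 2 > ... > m is the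
   identity permutation 1%g. *)
Definition ranking (m : nat) := {perm 'I_m}.

Definition prefers m (p : ranking m) (a b : 'I_m) : bool := (p a < p b)%N.

Definition identity_ranking m : ranking m := 1%g.

Definition cprofile (R : realType) m := {ffun ranking m -> R}.

Definition ctotal (R : realType) m (P : cprofile R m) : R := \sum_(p : ranking m) P p.

Definition is_cprofile (R : realType) m (P : cprofile R m) : Prop :=
  (forall p, 0 <= P p) /\ 0 < ctotal P.

Definition cnormalize (R : realType) m (P : cprofile R m) : cprofile R m :=
  [ffun p => P p / ctotal P].

Definition dprofile m n := {ffun 'I_n -> ranking m}.

Definition dweight m n (P : dprofile m n) (p : ranking m) : nat :=
  #|[set v | P v == p]|.

Definition dnormalize (R : realType) m n (P : dprofile m n) : cprofile R m :=
  [ffun p => (dweight P p)%:R / n%:R].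

Record voting_rule (R : realType) m := VotingRule {
  vr_disc : forall n, dprofile m n -> 'I_m;
  vr_cont : cprofile R m -> 'I_m }.

Definition homogeneous (R : realType) m (f : voting_rule R m) : Prop :=
  (forall n (P : dprofile m n), (0 < n)%N -> vr_disc f P = vr_cont f (dnormalize R P))
  /\ (forall P : cprofile R m, is_cprofile P -> vr_cont f P = vr_cont f (cnormalize P)).

Definition dCM (R : realType) m n (f : voting_rule R m) (P : dprofile m n) : bool :=
  [exists Q : dprofile m n,
     (vr_disc f Q != vr_disc f P) &&
     [forall v : 'I_n, (Q v != P v) ==> prefers (P v) (vr_disc f Q) (vr_disc f P)]].

Definition cCM (R : realType) m (f : voting_rule R m) (P : cprofile R m) : Prop :=
  exists Q : cprofile R m,
    [/\ is_cprofile Q, ctotal Q = ctotal P, vr_cont f Q != vr_cont f P &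
     forall p, Q p < P p -> prefers p (vr_cont f Q) (vr_cont f P)].

Definition pc_prob (R : realType) m n (theta : R) (P : dprofile m n) : R :=
  \prod_(v : 'I_n)
    ((if P v == identity_ranking m then theta else 0) + (1 - theta) / (m`!)%:R).

Definition cm_rate (R : realType) m (f : voting_rule R m) (n : nat) (theta : R) : R :=
  \sum_(P : dprofile m n | dCM f P) pc_prob theta P.

Definition expected_profile (R : realType) m (theta : R) : cprofile R m :=
  [ffun p => (if p == identity_ranking m then theta else 0) + (1 - theta) / (m`!)%:R].

(* A discrete profile drawn from Perturbed Culture is an i.i.d. sample of n rankings with
   law [expected_profile m theta], and its normalization is the empirical distribution of
   that sample.  By homogeneity, a discrete CM profile has a CM normalization, hence lies
   at distance at least eps from the expected profile in some coordinate p.  Each empirical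
   frequency has variance at most E p / n, so Chebyshev's inequality summed over p bounds
   the CM rate by 1 / (n eps^2). *)
From HB Require Import structures.
From mathcomp Require Import all_boot all_order all_algebra all_fingroup.
From mathcomp Require Import all_classical all_reals all_analysis.
From mathcomp Require Import ring lra.
Import Order.TTheory GRing.Theory Num.Theory.
Local Open Scope ring_scope.
Import numFieldNormedType.Exports.
Local Open Scope classical_set_scope.

Set Implicit Arguments.
Unset Strict Implicit.

Lemma ler_sum_subset (R : numDomainType) (I : finType) (P Q : pred I) (F : I -> R) :
  (forall i, P i -> Q i) -> (forall i, Q i -> 0 <= F i) ->
  \sum_(i | P i) F i <= \sum_(i | Q i) F i.
Proof.
move=> PQ F_ge0; rewrite big_mkcond [leRHS]big_mkcond; apply: ler_sum => i _.
case: (boolP (P i)) => [Pi|_]; first by rewrite PQ.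
by case: ifP => // /F_ge0.
Qed.

Section Empirical.
Variables (R : realType) (T : finType) (n : nat).

Definition empirical (g : {ffun 'I_n -> T}) (p : T) : R :=
  #|[set v | g v == p]%SET|%:R / n%:R.

Lemma card_preim1E (g : {ffun 'I_n -> T}) (p : T) :
  #|[set v | g v == p]%SET|%:R = \sum_v (g v == p)%:R :> R.
Proof.
rewrite -sum1_card natr_sum big_mkcond /=.
by apply: eq_bigr => v _; rewrite inE; case: (g v == p).
Qed.

Lemma empirical_ge0 g p : 0 <= empirical g p.
Proof. by rewrite divr_ge0. Qed.

Lemma sum_empirical g : (0 < n)%N -> \sum_p empirical g p = 1.
Proof.
move=> n_gt0; rewrite -mulr_suml.
under eq_bigr do rewrite card_preim1E.
rewrite exchange_big /=.
have indicator_sum1 v : \sum_p (g v == p)%:R = 1 :> R.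
  rewrite (bigD1 (g v)) //= eqxx big1 ?addr0 // => p.
  by rewrite eq_sym => /negbTE ->.
under eq_bigr do rewrite indicator_sum1.
by rewrite sumr_const card_ord mulfV // pnatr_eq0 -lt0n.
Qed.

Lemma empirical_subE g p (c : R) : (0 < n)%N ->
  empirical g p - c = (\sum_v ((g v == p)%:R - c)) / n%:R.
Proof.
move=> n_gt0; rewrite sumrB sumr_const card_ord -card_preim1E /empirical.
by field; rewrite pnatr_eq0 -lt0n.
Qed.
End Empirical.

Section IidWeight.
Variables (R : realType) (T : finType) (n : nat) (E : T -> R).
Hypothesis E_sum1 : \sum_j E j = 1.
Hypothesis E_ge0 : forall j, 0 <= E j.

Definition iid_weight (g : {ffun 'I_n -> T}) : R := \prod_v E (g v).

Lemma iid_weight_ge0 g : 0 <= iid_weight g.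
Proof. by apply: prodr_ge0 => v _. Qed.

Lemma sum_iid_weight_prod (h : 'I_n -> T -> R) :
  \sum_g iid_weight g * \prod_v h v (g v) = \prod_v \sum_j E j * h v j.
Proof. by rewrite bigA_distr_bigA; apply: eq_bigr => g _; rewrite -big_split. Qed.

Lemma iid_expect_pair (a b : T -> R) (u v : 'I_n) :
  \sum_g iid_weight g * (a (g u) * b (g v)) =
  if u == v then \sum_j E j * (a j * b j)
  else (\sum_j E j * a j) * (\sum_j E j * b j).
Proof.
pose h t j := (if t == u then a j else 1) * (if t == v then b j else 1).
transitivity (\prod_t \sum_j E j * h t j).
  rewrite -sum_iid_weight_prod; apply: eq_bigr => g _; congr (_ * _).
  by rewrite big_split /= -!big_mkcond !big_pred1_eq.
have h_other t : t != u -> t != v -> \sum_j E j * h t j = 1.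
  move=> /negbTE tu /negbTE tv; rewrite -[RHS]E_sum1.
  by apply: eq_bigr => j _; rewrite /h tu tv !mulr1.
case: (eqVneq u v) => [uv|uv]; first subst v.
  rewrite (bigD1 u) //= [X in _ * X]big1 ?mulr1 => [|t tu]; last exact: h_other.
  by apply: eq_bigr => j _; rewrite /h eqxx.
rewrite (bigD1 u) //= (bigD1 v) 1?eq_sym //= [X in _ * (_ * X)]big1.
  rewrite mulr1; congr (_ * _); apply: eq_bigr => j _.
    by rewrite /h eqxx (negbTE uv) mulr1.
  by rewrite /h eqxx eq_sym (negbTE uv) mul1r.
by move=> t /andP[tv tu]; exact: h_other.
Qed.

Lemma iid_count_second_moment (p : T) :
  \sum_g iid_weight g * (\sum_v ((g v == p)%:R - E p)) ^+ 2
  = n%:R * (E p * (1 - E p)).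
Proof.
pose a j := (j == p)%:R - E p.
have mean0 : \sum_j E j * a j = 0.
  rewrite /a; under eq_bigr do rewrite mulrBr.
  rewrite sumrB -mulr_suml E_sum1 mul1r (bigD1 p) //= eqxx mulr1.
  by rewrite big1 ?addr0 ?subrr // => j /negbTE ->; rewrite mulr0.
have var : \sum_j E j * (a j * a j) = E p * (1 - E p).
  have E_other : \sum_(j | j != p) E j = 1 - E p.
    by move: E_sum1; rewrite (bigD1 p) //=; lra.
  rewrite (bigD1 p) //= /a eqxx.
  under eq_bigr => j /negbTE -> do rewrite sub0r mulrNN.
  by rewrite -mulr_suml E_other (_ : true%:R = 1 :> R) //; ring.
transitivity (\sum_g \sum_u \sum_v iid_weight g * (a (g u) * a (g v))).
  apply: eq_bigr => g _; rewrite expr2 big_distrlr mulr_sumr.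
  by apply: eq_bigr => u _; rewrite mulr_sumr.
rewrite exchange_big; under eq_bigr do rewrite exchange_big.
under eq_bigr do under eq_bigr do rewrite iid_expect_pair mean0 mulr0.
rewrite mulr_natl -[in RHS](card_ord n) -sumr_const; apply: eq_bigr => u _.
by rewrite -big_mkcond (big_pred1 u) // => v; rewrite eq_sym.
Qed.

Lemma iid_empirical_deviation (eps : R) : (0 < n)%N -> 0 < eps ->
  \sum_(g | [exists p, eps <= `|empirical R g p - E p|]) iid_weight g
  <= (n%:R * eps ^+ 2)^-1.
Proof.
move=> n_gt0 eps_gt0.
have n_neq0 : n%:R != 0 :> R by rewrite pnatr_eq0 -lt0n.
have eps_neq0 : eps != 0 by rewrite gt_eqF.
pose D (g : {ffun 'I_n -> T}) p := ((empirical R g p - E p) / eps) ^+ 2.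
have markov : \sum_(g | [exists p, eps <= `|empirical R g p - E p|]) iid_weight g
              <= \sum_g iid_weight g * \sum_p D g p.
  rewrite big_mkcond /=; apply: ler_sum => g _.
  have sumD_ge0 : 0 <= \sum_p D g p by apply: sumr_ge0 => p _; exact: sqr_ge0.
  case: existsP => [[p dev]|_]; last exact: mulr_ge0 (iid_weight_ge0 g) sumD_ge0.
  rewrite ler_peMr ?iid_weight_ge0 //.
  apply: le_trans (_ : D g p <= _); last first.
    by rewrite (bigD1 p) //= lerDl; apply: sumr_ge0 => q _; exact: sqr_ge0.
  rewrite /D -real_normK ?num_real // exprn_ege1 //.
  by rewrite normrM normfV (gtr0_norm eps_gt0) ler_pdivlMr // mul1r.
apply: le_trans markov _.
have D_scale g p : D g p =
    (\sum_v ((g v == p)%:R - E p)) ^+ 2 / (n%:R * eps) ^+ 2.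
  by rewrite /D empirical_subE //; field; rewrite n_neq0 eps_neq0.
under eq_bigr do rewrite mulr_sumr.
rewrite exchange_big /=.
under eq_bigr do
  [under eq_bigr do rewrite D_scale mulrA; rewrite -mulr_suml iid_count_second_moment].
apply: le_trans (_ : \sum_p E p / (n%:R * eps ^+ 2) <= _); last first.
  by rewrite -mulr_suml E_sum1 mul1r.
apply: ler_sum => p _.
have -> : n%:R * (E p * (1 - E p)) / (n%:R * eps) ^+ 2
          = (E p - E p ^+ 2) / (n%:R * eps ^+ 2) by field; rewrite n_neq0 eps_neq0.
apply: ler_wpM2r; first by rewrite invr_ge0 mulr_ge0 // sqr_ge0.
by rewrite lerBlDr lerDl sqr_ge0.
Qed.
End IidWeight.

Lemma cvg_inv_natrM (R : realType) (c : R) : 0 < c ->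
  (n%:R * c)^-1 @[n --> \oo] --> (0 : R).
Proof.
move=> c_gt0.
have -> : (fun n : nat => (n%:R * c)^-1) = (fun n : nat => c^-1 * n%:R^-1).
  by apply/funext => n; rewrite invfM mulrC.
rewrite -(mulr0 c^-1); apply: cvgM; first exact: cvg_cst.
rewrite (@gtr0_cvgV0 R nat \oo _ (fun n : nat => n%:R)); first exact: cvgr_idn.
by exists 1%N => // k; rewrite /= ltr0n.
Qed.

Section PerturbedCulture.
Variables (R : realType) (m : nat) (theta : R).

Lemma expected_profile_ge0 p : 0 <= theta <= 1 -> 0 <= expected_profile m theta p.
Proof.
case/andP => theta_ge0 theta_le1.
by rewrite ffunE addr_ge0 ?divr_ge0 ?subr_ge0 //; case: ifP.
Qed.

Lemma sum_expected_profile : \sum_p expected_profile m theta p = 1.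
Proof.
under eq_bigr do rewrite ffunE.
rewrite big_split /= (bigD1 (identity_ranking m)) //= eqxx big1 ?addr0; last first.
  by move=> q /negbTE ->.
rewrite sumr_const card_Sn -mulr_natr; field.
by rewrite pnatr_eq0 -lt0n fact_gt0.
Qed.

Lemma pc_probE n (P : dprofile m n) :
  pc_prob theta P = iid_weight (expected_profile m theta) P.
Proof. by apply: eq_bigr => v _; rewrite ffunE. Qed.
End PerturbedCulture.

Section Homogeneity.
Variables (R : realType) (m n : nat).

Lemma dnormalizeE (P : dprofile m n) p : dnormalize R P p = empirical R P p.
Proof. by rewrite ffunE. Qed.

Lemma dnormalize_cprofile (P : dprofile m n) :
  (0 < n)%N -> is_cprofile (dnormalize R P) /\ ctotal (dnormalize R P) = 1.
Proof.
move=> n_gt0; have total1 : ctotal (dnormalize R P) = 1.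
  by rewrite /ctotal; under eq_bigr do rewrite dnormalizeE; exact: sum_empirical.
split=> //; split=> [p|]; first by rewrite dnormalizeE empirical_ge0.
by rewrite total1 ltr01.
Qed.

(* A ranking whose weight drops from P to Q was abandoned by some voter, who by dCM
   prefers the new winner. *)
Lemma dCM_cCM (f : voting_rule R m) (P : dprofile m n) :
  homogeneous f -> (0 < n)%N -> dCM f P -> cCM f (dnormalize R P).
Proof.
move=> [hom_disc _] n_gt0 /existsP [Q /andP [win_neq /forallP manip]].
have [Q_prof Q_total] := dnormalize_cprofile Q n_gt0.
have [_ P_total] := dnormalize_cprofile P n_gt0.
exists (dnormalize R Q); rewrite -!hom_disc //; split => // [|p].
  by rewrite Q_total P_total.
rewrite !ffunE ltr_pM2r ?invr_gt0 ?ltr0n // ltr_nat => lt_weight.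
have : ~~ ([set v | P v == p]%SET \subset [set v | Q v == p]%SET).
  by apply: contraTN lt_weight => sub; rewrite -leqNgt subset_leq_card.
case/subsetPn => v; rewrite !inE => /eqP Pv Qv.
by have := manip v; rewrite Pv Qv.
Qed.

Lemma dCM_empirical_far (f : voting_rule R m) (c : cprofile R m) (eps : R)
    (P : dprofile m n) :
  homogeneous f -> (0 < n)%N ->
  (forall Pc : cprofile R m, (forall p, 0 <= Pc p) -> ctotal Pc = 1 ->
     (forall p, `|Pc p - c p| < eps) -> ~ cCM f Pc) ->
  dCM f P -> [exists p, eps <= `|empirical R P p - c p|].
Proof.
move=> hom n_gt0 noCM CM_P; apply/contraT; rewrite negb_exists => /forallP near_c.
have [P_prof P_total] := dnormalize_cprofile P n_gt0.
have close p : `|dnormalize R P p - c p| < eps.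
  by rewrite dnormalizeE ltNge near_c.
by case: (noCM _ (proj1 P_prof) P_total close); exact: dCM_cCM.
Qed.
End Homogeneity.

Theorem lemma3p1 (R : realType) (m : nat) (theta : R) (f : voting_rule R m) :
  (0 < m)%N -> 0 < theta -> theta <= 1 ->
  homogeneous f ->
  (exists2 eps : R, 0 < eps &
     forall P : cprofile R m,
       (forall p, 0 <= P p) -> ctotal P = 1 ->
       (forall p, `|P p - expected_profile m theta p| < eps) ->
       ~ cCM f P) ->
  (fun n : nat => cm_rate f n theta) @ \oo --> (0 : R).
Proof.
move=> _ theta_gt0 theta_le1 hom [eps eps_gt0 noCM].
have E_ge0 p : 0 <= expected_profile m theta p.
  by rewrite expected_profile_ge0 // ltW.
apply: (@squeeze_cvgr _ _ _ _ (fun=> 0) (fun n => (n%:R * eps ^+ 2)^-1));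
  last 2 first.
- exact: cvg_cst.
- exact/cvg_inv_natrM/exprn_gt0.
exists 1%N => // n /= n_gt0.
have rate_ge0 : 0 <= cm_rate f n theta.
  by apply: sumr_ge0 => P _; rewrite pc_probE iid_weight_ge0.
rewrite rate_ge0 /=.
apply: le_trans (iid_empirical_deviation (sum_expected_profile _ _) E_ge0 n_gt0 eps_gt0).
rewrite /cm_rate; under eq_bigr do rewrite pc_probE.
apply: ler_sum_subset => [P|P _]; last exact: iid_weight_ge0.
exact: dCM_empirical_far.
Qed.
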